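(* Let $d\ge 2$ and let $\{|\phi^a_x\rangle\}_{a=0}^{d-1}$, $x=0,\dots,d$, be a complete set of $d+1$ mutually unbiased bases of $\mathbb{C}^d$. Then for every function $\lambda:\{0,\dots,d\}\to\{0,\dots,d-1\}$, $$\Big\|\sum_{x=0}^{d}|\phi^{\lambda(x)}_x\rangle\langle\phi^{\lambda(x)}_x|\Big\|_\infty\le 1+\sqrt d .$$ Equivalently, the operators $F_{a|x}=\frac{1}{1+\sqrt d}|\phi^a_x\rangle\langle\phi^a_x|$ satisfy $F_{a|x}\ge 0$ and $\sum_{a,x}\delta_{a,\lambda(x)}F_{a|x}\le\mathbb{I}$ for every such $\lambda$. *)

From HB Require Import structures.
From mathcomp Require Import all_boot all_order all_algebra.
From mathcomp Require Import complex.
From mathcomp Require Import reals.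
Set Implicit Arguments. Unset Strict Implicit. Unset Printing Implicit Defensive.
Import Order.TTheory GRing.Theory Num.Theory.
Local Open Scope ring_scope.

Definition cdot {C : numClosedFieldType} {n : nat} (u v : 'cV[C]_n) : C :=
  \sum_(i < n) (u i 0)^* * v i 0.

Definition vnorm2 {C : numClosedFieldType} {n : nat} (v : 'cV[C]_n) : C :=
  cdot v v.

Definition ketbra {C : numClosedFieldType} {n : nat} (u : 'cV[C]_n) : 'M[C]_n :=
  u *m (map_mx Num.conj u)^T.

(* Operator-norm bound ||A||_oo <= c, stated by definition of the operator
   norm: ||A v|| <= c ||v|| for all v (squared, with c >= 0). *)
Definition opnorm_le {C : numClosedFieldType} {n : nat} (A : 'M[C]_n) (c : C) : Prop :=
  0 <= c /\ forall v : 'cV[C]_n, vnorm2 (A *m v) <= c ^+ 2 * vnorm2 v.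

(* phi x a is the a-th vector of the x-th basis; (d+1) orthonormal bases of
   C^d that are pairwise mutually unbiased. *)
Definition complete_MUB {C : numClosedFieldType} (d : nat)
    (phi : 'I_d.+1 -> 'I_d -> 'cV[C]_d) : Prop :=
  (forall x a b, cdot (phi x a) (phi x b) = (a == b)%:R) /\
  (forall x y a b, x != y -> `|cdot (phi x a) (phi y b)| ^+ 2 = d%:R^-1).

From HB Require Import structures.
From mathcomp Require Import all_boot all_order all_algebra.
From mathcomp Require Import complex.
From mathcomp Require Import reals.
From mathcomp Require Import ring.
Import Order.TTheory GRing.Theory Num.Theory.
Local Open Scope ring_scope.

(* Let w = A v with A = sum_x |u_x><u_x| for unit vectors u_x whose pairwise
   overlaps are at most s, and write c_x = <u_x|v>.  Then <v|w> = sum_x |c_x|^2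
   =: S, and by the Schur test applied to the Gram matrix (whose row sums are at
   most k = 1 + (N - 1) s), ||w||^2 <= k S.  Expanding ||w - k v||^2 >= 0 then
   gives ||w||^2 <= k^2 ||v||^2.  For a complete set of MUBs, N = d + 1 and
   s = 1/sqrt d, so k = 1 + sqrt d. *)

Lemma mul2r_le_sqrD (R : numDomainType) (a b : R) :
  a \is Num.real -> b \is Num.real -> 2 * (a * b) <= a ^+ 2 + b ^+ 2.
Proof.
move=> a_real b_real; rewrite -subr_ge0.
have -> : a ^+ 2 + b ^+ 2 - 2 * (a * b) = (a - b) ^+ 2 by ring.
by rewrite -realEsqr realB.
Qed.

Lemma quad_form_le_row_sum (R : numFieldType) (N : nat) (a : 'I_N -> R)
    (h : 'I_N -> 'I_N -> R) (k : R) :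
  (forall x, a x \is Num.real) -> (forall x y, 0 <= h x y) ->
  (forall x y, h x y = h y x) -> (forall x, \sum_y h x y <= k) ->
  \sum_x \sum_y a x * a y * h x y <= k * \sum_x a x ^+ 2.
Proof.
move=> a_real h_ge0 hC h_rows.
have h_sym : \sum_x \sum_y a y ^+ 2 * h x y = \sum_x \sum_y a x ^+ 2 * h x y.
  by rewrite exchange_big; apply: eq_bigr => x _; apply: eq_bigr => y _; rewrite hC.
rewrite -(ler_pM2l (ltr0Sn R 1)) [X in X <= _]mulr_sumr.
apply: (@le_trans _ _ (\sum_x \sum_y (a x ^+ 2 * h x y + a y ^+ 2 * h x y))).
  apply: ler_sum => x _; rewrite mulr_sumr; apply: ler_sum => y _.
  by rewrite mulrA -(mulrDl (a x ^+ 2)) ler_wpM2r // mul2r_le_sqrD.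
under eq_bigr do rewrite big_split.
rewrite big_split /= h_sym -mulr2n -[X in X <= _]mulr_natl; apply: ler_wpM2l => //.
rewrite mulr_sumr; apply: ler_sum => x _; rewrite -mulr_sumr mulrC.
by apply: ler_wpM2r => //; rewrite -realEsqr.
Qed.

Section HermitianProduct.
Variables (C : numClosedFieldType) (n : nat).
Implicit Types u v w : 'cV[C]_n.

Lemma cdotC u v : cdot u v = (cdot v u)^*.
Proof. by rewrite /cdot rmorph_sum; apply: eq_bigr => i _; rewrite rmorphM /= conjCK mulrC. Qed.

Lemma cdotDr u v w : cdot u (v + w) = cdot u v + cdot u w.
Proof. by rewrite /cdot -big_split; apply: eq_bigr => i _; rewrite mxE mulrDr. Qed.

Lemma cdotZr u v a : cdot u (a *: v) = a * cdot u v.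
Proof. by rewrite /cdot mulr_sumr; apply: eq_bigr => i _; rewrite mxE mulrCA. Qed.

Lemma cdotBr u v w : cdot u (v - w) = cdot u v - cdot u w.
Proof. by rewrite cdotDr -scaleN1r cdotZr mulN1r. Qed.

Lemma cdotZl u v a : cdot (a *: u) v = a^* * cdot u v.
Proof. by rewrite cdotC cdotZr rmorphM /= -cdotC. Qed.

Lemma cdotBl u v w : cdot (v - w) u = cdot v u - cdot w u.
Proof. by rewrite cdotC cdotBr rmorphB /= -!cdotC. Qed.

Lemma cdot_sumr I (r : seq I) (P : pred I) (F : I -> 'cV[C]_n) u :
  cdot u (\sum_(i <- r | P i) F i) = \sum_(i <- r | P i) cdot u (F i).
Proof.
rewrite /cdot exchange_big; apply: eq_bigr => j _.
by rewrite summxE mulr_sumr.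
Qed.

Lemma cdot_suml I (r : seq I) (P : pred I) (F : I -> 'cV[C]_n) u :
  cdot (\sum_(i <- r | P i) F i) u = \sum_(i <- r | P i) cdot (F i) u.
Proof. by rewrite cdotC cdot_sumr rmorph_sum /=; apply: eq_bigr => i _; rewrite -cdotC. Qed.

Lemma vnorm2_ge0 u : 0 <= vnorm2 u.
Proof. by apply: sumr_ge0 => i _; rewrite mulrC -normCK exprn_ge0. Qed.

Lemma ketbra_mulmx u v : ketbra u *m v = cdot u v *: u.
Proof.
apply/matrixP => i j; rewrite (ord1 j) !mxE /cdot mulr_suml.
apply: eq_bigr => k _; rewrite !mxE big_ord1 !mxE.
by rewrite [RHS]mulrC mulrA.
Qed.

Lemma vnorm2_le_of_cdot v w (k : C) :
  0 <= k -> 0 <= cdot v w -> vnorm2 w <= k * cdot v w ->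
  vnorm2 w <= k ^+ 2 * vnorm2 v.
Proof.
move=> k_ge0 S_ge0 w_le; have := vnorm2_ge0 (w - k *: v).
have wvE : cdot w v = cdot v w by rewrite cdotC geC0_conj.
rewrite /vnorm2 cdotBl !cdotBr !cdotZl !cdotZr geC0_conj // wvE.
set S := cdot v w => expand_ge0; rewrite -subr_ge0.
have -> : k ^+ 2 * cdot v v - cdot w w
    = (cdot w w - k * S - (k * S - k * (k * cdot v v)))
      + 2 * (k * S - cdot w w) by ring.
by rewrite addr_ge0 // mulr_ge0 // subr_ge0.
Qed.

Lemma vnorm2_sum_le N (c : 'I_N -> C) (u : 'I_N -> 'cV[C]_n) :
  vnorm2 (\sum_x c x *: u x)
    <= \sum_x \sum_y `|c x| * `|c y| * `|cdot (u x) (u y)|.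
Proof.
rewrite -[vnorm2 _]ger0_norm ?vnorm2_ge0 // /vnorm2 cdot_suml.
apply: le_trans (ler_norm_sum _ _ _) _; apply: ler_sum => x _.
rewrite cdotZl cdot_sumr normrM norm_conjC.
apply: le_trans (ler_wpM2l (normr_ge0 _) (ler_norm_sum _ _ _)) _.
by rewrite mulr_sumr; apply: ler_sum => y _; rewrite cdotZr normrM !mulrA.
Qed.

Lemma opnorm_le_sum_ketbra N (u : 'I_N -> 'cV[C]_n) (s : C) :
  0 <= s -> (forall x, vnorm2 (u x) = 1) ->
  (forall x y, x != y -> `|cdot (u x) (u y)| <= s) ->
  opnorm_le (\sum_x ketbra (u x)) (1 + (N.-1)%:R * s).
Proof.
move=> s_ge0 u_unit u_overlap.
set k := 1 + _; have k_ge0 : 0 <= k by rewrite addr_ge0 // mulr_ge0 // ler0n.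
split=> // v; set c := fun x => cdot (u x) v.
have -> : (\sum_x ketbra (u x)) *m v = \sum_x c x *: u x.
  by rewrite mulmx_suml; apply: eq_bigr => x _; rewrite ketbra_mulmx.
have vwE : cdot v (\sum_x c x *: u x) = \sum_x `|c x| ^+ 2.
  by rewrite cdot_sumr; apply: eq_bigr => x _; rewrite cdotZr normCK [cdot v _]cdotC mulrC.
have row_sum x : \sum_y `|cdot (u x) (u y)| <= k.
  rewrite (bigD1 x) //= (u_unit x : cdot _ _ = 1) normr1 lerD2l.
  apply: le_trans (ler_sum _ (fun y xy => u_overlap x y _)) _; first by move=> y; rewrite eq_sym.
  by rewrite sumr_const cardC1 card_ord mulr_natl.
apply: vnorm2_le_of_cdot => //; first by rewrite vwE sumr_ge0 // => x _; rewrite exprn_ge0.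
apply: le_trans (vnorm2_sum_le _ c u) _; rewrite vwE.
apply: quad_form_le_row_sum => // [x|x y]; first exact: normr_real.
by rewrite [cdot (u x) _]cdotC norm_conjC.
Qed.

End HermitianProduct.

Theorem mainTheorem2 (R : realType) (d : nat) (hd : (2 <= d)%N)
    (phi : 'I_d.+1 -> 'I_d -> 'cV[R[i]]_d)
    (hMUB : complete_MUB phi) (lambda : 'I_d.+1 -> 'I_d) :
  opnorm_le (\sum_(x < d.+1) ketbra (phi x (lambda x))) (1 + sqrtC (d%:R)).
Proof.
have [phi_orthonormal phi_unbiased] := hMUB.
have sqrt_d_neq0 : sqrtC (d%:R : R[i]) != 0.
  by rewrite sqrtC_eq0 pnatr_eq0 -lt0n (leq_trans _ hd).
have s_ge0 : 0 <= (sqrtC (d%:R : R[i]))^-1 by rewrite invr_ge0 sqrtC_ge0 ler0n.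
have -> : 1 + sqrtC (d%:R : R[i]) = 1 + (d.+1.-1)%:R * (sqrtC d%:R)^-1.
  by congr (_ + _); apply: (mulIf sqrt_d_neq0); rewrite divfK // -expr2 sqrtCK.
apply: opnorm_le_sum_ketbra => // [x|x y xy].
  by rewrite /vnorm2 phi_orthonormal eqxx.
have inv_d : (d%:R : R[i])^-1 = ((sqrtC d%:R)^-1) ^+ 2 by rewrite exprVn sqrtCK.
by rewrite -(sqrCK (normr_ge0 _)) phi_unbiased // inv_d (sqrCK s_ge0).
Qed.
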